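(* Let $\mathcal F$, $\mathcal B$, $\mathcal D$, $\mathrm{Bo}$, $S$, $\widehat S$ and $M$ be as in the context, and take $f=\omega\xi$ in the definition of $S$. If $(\omega,\xi,\Phi)$ is a solution of the ice-fishing problem (IFP) below, then $(\omega^2,\xi)$ solves $$\xi-\frac{1}{\mathrm{Bo}}(I-M)\Delta_{\mathcal F}\xi=\omega^2(I-M)\widehat S\xi\ \text{ on }\mathcal F,\qquad \partial_{\mathbf n_{\mathcal F}}\xi=0\ \text{ on }\partial\mathcal F,\qquad \int_{\mathcal F}\xi\,dA=0. \quad (\ast)$$ Moreover, if $(\omega^2,\xi)$ is a solution of $(\ast)$ and we define $$\Phi=\omega S\xi-\omega M\widehat S\xi-\frac{1}{\omega\,\mathrm{Bo}}M\Delta\xi,$$ then $(\omega,\xi,\Phi)$ is a solution of the IFP.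
   Context: Coordinates $\mathbf x=(x,y,z)\in\mathbb R^3$. The fluid domain is $\mathcal D=\{z<0\}$. The free surface $\mathcal F$ is either the infinite parallel strip $\{|x|<1,z=0\}$ (with $\mathcal B=\{|x|>1,z=0\}$, $\partial\mathcal F=\{|x|=1,z=0\}$) or the circular hole $\{|(x,y)|<1,z=0\}$ (with $\mathcal B=\{|(x,y)|>1,z=0\}$, $\partial\mathcal F=\{|(x,y)|=1,z=0\}$). $\mathrm{Bo}>0$ is the Bond number, $\Delta_{\mathcal F}$ is the Laplacian on the free surface and $\partial_{\mathbf n_{\mathcal F}}$ the derivative in the direction normal to $\partial\mathcal F$ within the plane $z=0$. The IFP is the problem of finding $(\omega,\Phi,\xi)$ with $\Delta\Phi=0$ in $\mathcal D$; $\partial_z\Phi=0$ on $\mathcal B$; $\partial_z\Phi=\omega\xi$ on $\mathcal F$; $\xi-\frac{1}{\mathrm{Bo}}\Delta_{\mathcal F}\xi=\omega\Phi$ on $\mathcal F$; $\partial_{\mathbf n_{\mathcal F}}\xi=0$ on $\partial\mathcal F$; $\int_{\mathcal F}\xi\,dA=0$. Operator $S$: for Neumann data $f$ on $\mathcal F$, $S$ is the operator such that the solution $\Phi$ of $\Delta\Phi=0$ in $\mathcal D$, $\partial_z\Phi=f\chi_{\mathcal F}$ on $\{z=0\}$ can be written $\Phi=S[f\chi_{\mathcal F}]+\Phi_\infty$ with $\Phi_\infty$ a constant and $S f(\mathbf x)\to 0$ as $|\mathbf x|\to\infty$. $\widehat S$ denotes the restriction of $S$ to $z=0$. $M$ is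 the mean value operator $Mf=\frac{1}{|\mathcal F|}\int_{\mathcal F}f\,dA$, and $I$ is the identity. *)

From HB Require Import structures.
From mathcomp Require Import all_boot all_order all_algebra.
From mathcomp Require Import all_classical all_reals all_analysis.
Unset Printing Implicit Defensive.
Import Order.TTheory GRing.Theory Num.Theory.
Import numFieldNormedType.Exports.
Local Open Scope classical_set_scope.
Local Open Scope ring_scope.

(* A geometry of the free surface: horizontal coordinate space [surf],
   an orthonormal coordinate basis [dirs] of it, the free surface F, the
   rest B of the plane z = 0, the boundary dF of F, the outward unit normal
   on dF, the integral over F (dA), integrability on F and |F|. *)
Record geometry (R : realType) := Geometry {
  surf : normedModType R;
  dirs : seq surf;
  Fset : set surf;
  Bset : set surf;
  dFset : set surf;
  normalF : surf -> surf;
  integF : (surf -> R) -> R;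
  integrableF : (surf -> R) -> Prop;
  areaF : R }.
Arguments surf {R}. Arguments dirs {R}. Arguments Fset {R}. Arguments Bset {R}.
Arguments dFset {R}. Arguments normalF {R}. Arguments integF {R}.
Arguments integrableF {R}. Arguments areaF {R}.

(* The strip: cross-section (x,z), free surface |x| < 1. *)
Definition strip_geom (R : realType) : geometry R :=
  @Geometry R R^o [:: (1 : R^o)]
    [set x : R^o | `|x| < 1] [set x : R^o | 1 < `|x|] [set x : R^o | `|x| = 1]
    (fun x => x)
    (fun f => Rintegral (@lebesgue_measure R) [set x : R | `|x| < 1] (fun x => f x))
    (fun f => (@lebesgue_measure R).-integrable [set x : R | `|x| < 1]
                 (fun x => (f x)%:E))
    (fine (@lebesgue_measure R [set x : R | `|x| < 1])).

Definition disk (R : realType) : set (R * R) := [set p | p.1 ^+ 2 + p.2 ^+ 2 < 1].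

Definition hole_geom (R : realType) : geometry R :=
  @Geometry R (R^o * R^o)%type [:: ((1 : R^o), (0 : R^o)); ((0 : R^o), (1 : R^o))]
    (disk R) [set p | 1 < p.1 ^+ 2 + p.2 ^+ 2] [set p | p.1 ^+ 2 + p.2 ^+ 2 = 1]
    (fun p => p)
    (fun f => Rintegral ((@lebesgue_measure R) \x (@lebesgue_measure R))%E (disk R)
                 (fun p => f p))
    (fun f => ((@lebesgue_measure R) \x (@lebesgue_measure R))%E.-integrable (disk R)
                 (fun p => (f p)%:E))
    (fine (((@lebesgue_measure R) \x (@lebesgue_measure R))%E (disk R))).

Section Defs.
Context {R : realType} (G : geometry R).

(* points of the fluid region: (horizontal coordinates, z) *)
Definition pt := (surf G * R^o)%type.
Definition Dset : set pt := [set p | p.2 < 0].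
Definition Dclos : set pt := [set p | p.2 <= 0].
Definition ez : pt := (0, 1).
Definition dirs3 : seq pt := [seq (u, 0) | u <- dirs G] ++ [:: ez].

Definition MF (f : surf G -> R) : R := integF G f / areaF G.

Definition LapF (xi : surf G -> R) (h : surf G) : R :=
  \sum_(u <- dirs G) 'D_u ('D_u xi) h.

Definition Lap3 (Phi : pt -> R) (p : pt) : R :=
  \sum_(e <- dirs3) 'D_e ('D_e Phi) p.

Definition harmonic_on (A : set pt) (Phi : pt -> R) :=
  forall p, A p ->
    (forall e, e \in dirs3 -> derivable Phi p e /\ derivable ('D_e Phi) p e) /\
    Lap3 Phi p = 0.

Definition admissible_pot (Phi : pt -> R) :=
  harmonic_on Dset Phi /\
  (exists C, forall p, Dset p -> `|Phi p| <= C) /\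
  {within Dclos, continuous Phi}.

Definition neumann_sol (Phi : pt -> R) (g : surf G -> R) :=
  admissible_pot Phi /\
  forall h, Fset G h \/ Bset G h ->
    'D_ez Phi @ within Dset (nbhs ((h, 0) : pt)) --> g h.

Definition chiF (f : surf G -> R) (h : surf G) : R := (\1_(Fset G) h : R) * f h.

Definition decays (Phi : pt -> R) :=
  forall eps : R, 0 < eps -> exists K : R,
    forall p, Dset p -> K < `|p| -> `|Phi p| < eps.

Definition surf_regular (xi : surf G -> R) :=
  (exists U : set (surf G), open U /\ closure (Fset G) `<=` U /\
    forall h, U h -> differentiable xi h /\
      forall u, u \in dirs G ->
        {for h, continuous ('D_u xi)} /\ derivable ('D_u xi) h u) /\
  integrableF G xi /\ integrableF G (LapF xi).

Definition data_class (f : surf G -> R) := surf_regular f /\ integF G f = 0.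

Definition is_S (S : (surf G -> R) -> pt -> R) :=
  forall f, data_class f ->
    [/\ neumann_sol (S f) (chiF f), decays (S f) &
        forall Phi, neumann_sol Phi (chiF f) ->
          exists c : R, forall p, Dclos p -> Phi p = S f p + c].

Definition Shat (S : (surf G -> R) -> pt -> R) (f : surf G -> R) (h : surf G) : R :=
  S f (h, 0).

Definition IFP (Bo om : R) (Phi : pt -> R) (xi : surf G -> R) :=
  [/\ neumann_sol Phi (chiF (fun h => om * xi h)),
      surf_regular xi,
      forall h, Fset G h -> xi h - Bo^-1 * LapF xi h = om * Phi (h, 0),
      forall h, dFset G h -> 'D_(normalF G h) xi h = 0 &
      integF G xi = 0].

Definition star_problem (Bo : R) (S : (surf G -> R) -> pt -> R) (lam : R)
    (xi : surf G -> R) :=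
  [/\ surf_regular xi,
      forall h, Fset G h ->
        xi h - Bo^-1 * (LapF xi h - MF (LapF xi))
          = lam * (Shat S xi h - MF (Shat S xi)),
      forall h, dFset G h -> 'D_(normalF G h) xi h = 0 &
      integF G xi = 0].

End Defs.

From HB Require Import structures.
From mathcomp Require Import all_boot all_order all_algebra.
From mathcomp Require Import all_classical all_reals all_analysis.
From mathcomp Require Import ring lra.
Import Order.TTheory GRing.Theory Num.Theory.
Import numFieldNormedType.Exports.
Local Open Scope classical_set_scope.
Local Open Scope ring_scope.

(* By the uniqueness part of S, a Neumann solution with data om xi chi_F
   (om <> 0) is om (S xi + c) for some constant c.  Inserting this into the
   dynamic condition xi - Bo^-1 Lap_F xi = om Phi expresses Shat xi on F as
   an affine combination of xi and Lap_F xi; applying I - M removes the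
   unknown constant c and, as M xi = 0, yields ( * ).  For om = 0 the
   dynamic condition says Lap_F xi = Bo xi, whose mean vanishes.  Conversely,
   the constant in the proposed Phi is the one for which om Phi(., 0) turns
   ( * ) back into the dynamic condition. *)

Section derive_affine.
Context {R : realType} {V : normedModType R}.
Variables (f : V -> R) (k c : R).
Hypothesis k_neq0 : k != 0.

Let difference_quotient_affine (a v : V) :
  (fun h : R => h^-1 *: (((fun p => k * f p + c) \o shift a) (h *: v) - (k * f a + c)))
  = k *: (fun h : R => h^-1 *: ((f \o shift a) (h *: v) - f a)).
Proof. by rewrite scalrfctE; apply/funext => h /=; rewrite /GRing.scale /=; ring. Qed.

Lemma derivable_affine (a v : V) :
  derivable (fun p => k * f p + c) a v = derivable f a v.
Proof. by rewrite /derivable difference_quotient_affine is_cvgZlE. Qed.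

(* No derivability hypothesis is needed: where [f] is not derivable both
   sides are the junk value [0] of [lim]. *)
Lemma derive_affine (v : V) :
  'D_v (fun p => k * f p + c) = (fun a => k * 'D_v f a).
Proof.
apply/funext => a; rewrite /derive difference_quotient_affine.
have [cvf|dvf] := pselect (cvg ((fun h : R => h^-1 *: ((f \o shift a) (h *: v) - f a)) @ 0^')).
  by rewrite limZl_tmp.
rewrite [in RHS]dvgP // dvgP; last by rewrite is_cvgZlE.
exact: (esym (mulr0 k)).
Qed.

End derive_affine.

Section derive_scale.
Context {R : realType} {V : normedModType R}.
Variables (f : V -> R) (k : R).
Hypothesis k_neq0 : k != 0.

Let scale_affine : (fun p => k * f p) = (fun p => k * f p + 0).
Proof. by apply/funext => p; rewrite addr0. Qed.

Lemma derivable_scale (a v : V) : derivable (fun p => k * f p) a v = derivable f a v.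
Proof. by rewrite scale_affine derivable_affine. Qed.

Lemma derive_scale (a v : V) : derive (fun p => k * f p) a v = k * derive f a v.
Proof.
rewrite scale_affine.
exact: (congr1 (fun F => F a) (derive_affine f k 0 k_neq0 v)).
Qed.

End derive_scale.

Section neumann_affine.
Context {R : realType} (G : geometry R).
Variables (k c : R).
Hypothesis k_neq0 : k != 0.

Lemma Lap3_affine (Phi : pt G -> R) (p : pt G) :
  Lap3 G (fun q => k * Phi q + c) p = k * Lap3 G Phi p.
Proof.
rewrite /Lap3 big_distrr /=; apply: eq_bigr => e _.
by rewrite (derive_affine _ _ _ k_neq0) (derive_scale _ _ k_neq0).
Qed.

Lemma harmonic_on_affine (A : set (pt G)) (Phi : pt G -> R) :
  harmonic_on G A Phi -> harmonic_on G A (fun q => k * Phi q + c).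
Proof.
move=> harmPhi p Ap; have [derPhi LapPhi] := harmPhi p Ap; split.
  move=> e /derPhi[d1 d2].
  by rewrite (derivable_affine _ _ _ k_neq0) (derive_affine _ _ _ k_neq0)
    (derivable_scale _ _ k_neq0).
by rewrite Lap3_affine LapPhi mulr0.
Qed.

Lemma admissible_pot_affine (Phi : pt G -> R) :
  admissible_pot G Phi -> admissible_pot G (fun q => k * Phi q + c).
Proof.
move=> [harmPhi [[C boundPhi] contPhi]]; split; [|split].
- exact: harmonic_on_affine.
- exists (`|k| * C + `|c|) => p Dp.
  apply: le_trans (ler_normD _ _) _; rewrite lerD2r normrM.
  by apply: ler_wpM2l => //; exact: boundPhi.
- by move=> x; apply: cvgD; [apply: cvgMl_tmp; exact: contPhi | exact: cvg_cst].
Qed.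

Lemma neumann_sol_affine (Phi : pt G -> R) (g : surf G -> R) :
  neumann_sol G Phi g -> neumann_sol G (fun q => k * Phi q + c) (fun h => k * g h).
Proof.
move=> [admPhi dzPhi]; split; first exact: admissible_pot_affine.
by move=> h Fh; rewrite (derive_affine _ _ _ k_neq0); apply: cvgMl_tmp; exact: dzPhi.
Qed.

End neumann_affine.

Definition integral_spec {R : realType} {A : Type} (F : set A)
    (I : (A -> R) -> R) (integrable : (A -> R) -> Prop) (area : R) :=
  [/\ area != 0,
      forall f g, (forall h, F h -> f h = g h) -> I f = I g &
      forall f1 f2 (a b c : R), integrable f1 -> integrable f2 ->
        I (fun h => a * f1 h + b * f2 h + c) = a * I f1 + b * I f2 + c * area].

Section integral_spec_theory.
Context {R : realType} {A : Type} {F : set A} {I : (A -> R) -> R}.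
Context {integrable : (A -> R) -> Prop} {area : R}.
Hypothesis Ispec : integral_spec F I integrable area.

Lemma center_affine {g f1 f2 : A -> R} {a b c : R} :
  integrable f1 -> integrable f2 ->
  (forall h, F h -> g h = a * f1 h + b * f2 h + c) ->
  forall h, F h ->
    g h - I g / area = a * (f1 h - I f1 / area) + b * (f2 h - I f2 / area).
Proof.
case: Ispec => area_neq0 I_local I_affine i1 i2 gE h Fh.
rewrite (I_local _ _ gE) I_affine // gE //.
by field.
Qed.

End integral_spec_theory.

Section measure_integral_spec.
Context {R : realType} {d} {T : measurableType d} (mu : {measure set T -> \bar R}).
Variable D : set T.
Hypotheses (mD : measurable D) (muD_gt0 : (0 < mu D)%E) (muD_lty : (mu D < +oo)%E).

Let integrable_cst (c : R) : mu.-integrable D (fun=> c%:E).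
Proof.
apply/integrableP; split; first exact: measurable_cst.
by rewrite integral_cst // lte_mul_pinfty.
Qed.

Lemma Rintegral_spec :
  integral_spec D (fun f => Rintegral mu D f)
    (fun f => mu.-integrable D (fun x => (f x)%:E)) (fine (mu D)).
Proof.
split.
- by rewrite gt_eqF // fine_gt0 // muD_gt0 muD_lty.
- by move=> f g fg; apply: eq_Rintegral => x /set_mem /fg.
move=> f1 f2 a b c i1 i2.
have ia1 : mu.-integrable D (EFin \o (fun x => a * f1 x)).
  by apply: eq_integrable mD _ _ _ (integrableZl mD a i1) => x _.
have ib2 : mu.-integrable D (EFin \o (fun x => b * f2 x)).
  by apply: eq_integrable mD _ _ _ (integrableZl mD b i2) => x _.
have iab : mu.-integrable D (EFin \o (fun x => a * f1 x + b * f2 x)).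
  by apply: eq_integrable mD _ _ _ (integrableD mD ia1 ib2) => x _.
rewrite /= (RintegralD mD iab (integrable_cst c)) RintegralD //.
by rewrite !RintegralZl // Rintegral_cst.
Qed.

End measure_integral_spec.

Section free_surfaces.
Context {R : realType}.
Local Notation mu := (@lebesgue_measure R).

Lemma lebesgue_measure_centered_itv (a : R) : 0 < a ->
  mu [set` `](- a), a[] = (a *+ 2)%:E.
Proof.
move=> a_gt0; rewrite lebesgue_measure_itv /= ifT; last by rewrite lte_fin; lra.
by rewrite -EFinB; congr EFin; lra.
Qed.

Lemma strip_integral_spec : integral_spec (Fset (strip_geom R))
  (integF (strip_geom R)) (integrableF (strip_geom R)) (areaF (strip_geom R)).
Proof.
pose strip := [set x : R | `|x| < 1].
have stripE : strip = [set` `](-1), 1[].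
  by rewrite predeqE => x; rewrite /strip /= in_itv /= ltr_norml.
have mu_strip : mu strip = 2%:E by rewrite stripE lebesgue_measure_centered_itv.
have m_strip : measurable strip by rewrite stripE; exact: measurable_itv.
have strip_gt0 : (0 < mu strip)%E by rewrite mu_strip lte_fin.
have strip_lty : (mu strip < +oo)%E by rewrite mu_strip ltry.
exact: (Rintegral_spec mu _ m_strip strip_gt0 strip_lty).
Qed.

Lemma measurable_disk : measurable (disk R).
Proof.
have msq : measurable_fun setT (fun p : R * R => p.1 ^+ 2 + p.2 ^+ 2).
  apply: measurable_realfun.measurable_funD; apply: measurable_realfun.measurable_funX.
    exact: measurable_fst.
  exact: measurable_snd.
by have := msq measurableT _ (measurable_itv `]-oo, 1[); rewrite setTI.
Qed.

Lemma product_measure_centered_square (a : R) : 0 < a ->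
  (mu \x mu)%E ([set` `](- a), a[] `*` [set` `](- a), a[]) = ((a *+ 2) * (a *+ 2))%:E.
Proof.
move=> a_gt0; rewrite product_measure1E; try exact: measurable_itv.
by rewrite EFinM; congr (_ * _)%E; exact: lebesgue_measure_centered_itv.
Qed.

(* The disk lies between the squares of half-sides 1/2 and 1. *)
Lemma disk_measure_gt0_lty :
  (0 < (mu \x mu)%E (disk R))%E /\ ((mu \x mu)%E (disk R) < +oo)%E.
Proof.
split.
- apply: (@lt_le_trans _ _ (((1/2) *+ 2) * ((1/2) *+ 2))%:E); first by rewrite lte_fin; lra.
  rewrite -product_measure_centered_square; last lra.
  apply: le_measure; rewrite ?inE; [exact: measurableX | exact: measurable_disk |].
  move=> [x y]; rewrite /disk /= !in_itv /= => -[/andP[? ?] /andP[? ?]]; nra.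
- apply: (@le_lt_trans _ _ ((1 *+ 2) * (1 *+ 2))%:E); last by rewrite ltry.
  rewrite -product_measure_centered_square //.
  apply: le_measure; rewrite ?inE; [exact: measurable_disk | exact: measurableX |].
  move=> [x y]; rewrite /disk /= !in_itv /= => ?.
  by split; apply/andP; split; nra.
Qed.

Lemma hole_integral_spec : integral_spec (Fset (hole_geom R))
  (integF (hole_geom R)) (integrableF (hole_geom R)) (areaF (hole_geom R)).
Proof.
have [disk_gt0 disk_lty] := disk_measure_gt0_lty.
by apply: (Rintegral_spec (mu \x mu)%E) => //; exact: measurable_disk.
Qed.

End free_surfaces.

Lemma free_surface_integral_spec {R : realType} {G : geometry R} :
  G = strip_geom R \/ G = hole_geom R ->
  integral_spec (Fset G) (integF G) (integrableF G) (areaF G).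
Proof. by case=> ->; [exact: strip_integral_spec | exact: hole_integral_spec]. Qed.

Section ice_fishing.
Context {R : realType} (G : geometry R).
Variables (Bo : R) (S : (surf G -> R) -> pt G -> R).
Hypotheses (Bo_neq0 : Bo != 0) (S_spec : is_S G S).
Hypothesis Ispec : integral_spec (Fset G) (integF G) (integrableF G) (areaF G).

Lemma chiF_scale (k : R) (f : surf G -> R) :
  chiF G (fun h => k * f h) = (fun h => k * chiF G f h).
Proof. by apply/funext => h; rewrite /chiF mulrCA. Qed.

Lemma neumann_sol_S_affine (xi : surf G -> R) (om c : R) : om != 0 ->
  data_class G xi ->
  neumann_sol G (fun p => om * S xi p + c) (chiF G (fun h => om * xi h)).
Proof.
move=> om_neq0 /S_spec[Sxi_sol _ _]; rewrite chiF_scale.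
exact: neumann_sol_affine.
Qed.

(* Divide by [om] and use the uniqueness clause of [is_S]. *)
Lemma neumann_sol_S_uniq {xi : surf G -> R} {om : R} {Phi : pt G -> R} :
  om != 0 -> data_class G xi ->
  neumann_sol G Phi (chiF G (fun h => om * xi h)) ->
  exists c, forall p, Dclos G p -> Phi p = om * (S xi p + c).
Proof.
move=> om_neq0 /S_spec[_ _ S_unique] Phi_sol.
have Phi_om_sol : neumann_sol G (fun p => om^-1 * Phi p + 0) (chiF G xi).
  have -> : chiF G xi = (fun h => om^-1 * chiF G (fun h => om * xi h) h).
    by rewrite chiF_scale; apply/funext => h; rewrite mulrA mulVf // mul1r.
  by apply: neumann_sol_affine; rewrite ?invr_eq0.
have [c Phi_omE] := S_unique _ Phi_om_sol.
exists c => p Dp; rewrite -Phi_omE // addr0 mulrA mulfV //.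
by rewrite mul1r.
Qed.

Lemma IFP_star_problem (om : R) (Phi : pt G -> R) (xi : surf G -> R) :
  IFP G Bo om Phi xi -> star_problem G Bo S (om ^+ 2) xi.
Proof.
move=> [Phi_sol xi_reg dyn kin mean0]; split => // h Fh.
have [_ [int_xi int_Lap]] := xi_reg.
have [om0|om_neq0] := eqVneq om 0.
  subst om; have LapE h' : Fset G h' -> LapF G xi h' = Bo * xi h' + 0 * xi h' + 0.
    move=> Fh'; have /subr0_eq -> : xi h' - Bo^-1 * LapF G xi h' = 0.
      by rewrite dyn // mul0r.
    by rewrite mulrA mulfV // mul1r mul0r !addr0.
  rewrite /MF (center_affine Ispec int_xi int_xi LapE h Fh) mean0.
  by rewrite !mul0r !subr0 addr0 mulKf // subrr expr0n mul0r.
have [c PhiE] := neumann_sol_S_uniq om_neq0 (conj xi_reg mean0) Phi_sol.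
have ShatE h' : Fset G h' ->
    Shat G S xi h' = om^-2 * xi h' + (- (om^-2 * Bo^-1)) * LapF G xi h' + (- c).
  move=> Fh'; have := dyn h' Fh'; rewrite PhiE /Dclos //= /Shat => dynE.
  have -> : S xi (h', 0) = om^-2 * (om * (om * (S xi (h', 0) + c))) - c by field.
  by rewrite -dynE; field; rewrite Bo_neq0 om_neq0.
rewrite /MF (center_affine Ispec int_xi int_Lap ShatE h Fh) mean0.
have [area_neq0 _ _] := Ispec.
by field; rewrite area_neq0 Bo_neq0 om_neq0.
Qed.

Lemma star_problem_IFP (om : R) (xi : surf G -> R) : om != 0 ->
  star_problem G Bo S (om ^+ 2) xi ->
  IFP G Bo om (fun p => om * S xi p - om * MF G (Shat G S xi)
                        - (om * Bo)^-1 * MF G (LapF G xi)) xi.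
Proof.
move=> om_neq0 [xi_reg dyn kin mean0]; split => //.
- pose c := - (om * MF G (Shat G S xi)) - (om * Bo)^-1 * MF G (LapF G xi).
  rewrite (_ : (fun p => _) = (fun p => om * S xi p + c)); last first.
    by apply/funext => p; rewrite addrA.
  exact: neumann_sol_S_affine.
- move=> h Fh; have := dyn h Fh; rewrite /Shat => dynE.
  have -> : xi h - Bo^-1 * LapF G xi h =
      om ^+ 2 * (S xi (h, 0) - MF G (Shat G S xi)) - Bo^-1 * MF G (LapF G xi).
    by rewrite -dynE; ring.
  by field; rewrite om_neq0 Bo_neq0.
Qed.

End ice_fishing.

Theorem mainTheorem2 (R : realType) (G : geometry R)
  (HG : G = strip_geom R \/ G = hole_geom R)
  (Bo : R) (HBo : 0 < Bo) (S : (surf G -> R) -> pt G -> R) (HS : is_S G S) :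
  (forall (om : R) (Phi : pt G -> R) (xi : surf G -> R),
      IFP G Bo om Phi xi -> star_problem G Bo S (om ^+ 2) xi) /\
  (forall (om : R) (xi : surf G -> R), om != 0 ->
      star_problem G Bo S (om ^+ 2) xi ->
      IFP G Bo om
        (fun p => om * S xi p - om * MF G (Shat G S xi)
                  - (om * Bo)^-1 * MF G (LapF G xi)) xi).
Proof.
have Bo_neq0 : Bo != 0 by rewrite gt_eqF.
have Ispec := free_surface_integral_spec HG.
split; [exact: IFP_star_problem | exact: star_problem_IFP].
Qed.
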